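(* In the bandit exponential-weights setting described in the context, $$\Gamma_2:=(e-2)\eta\,\mathbb{E}\left[\sum_{t=1}^n\mathbb{E}_{a\sim q_t}\left[\langle\hat w_t,\Phi_m(a)\rangle^2\,\Big|\,\mathcal{F}_{t-1}\right]\right]\le\frac{(e-2)\mathcal{G}^4\eta mn}{1-\gamma}.$$
   Context: $\mathcal{A}\subset\mathbb{R}^d$ finite; $\mathcal{K}$ a kernel with feature map $\Phi$ and the adversary plays $w_t=\Phi(y_t)$ with $|\mathcal{K}(a,y_t)|\le\mathcal{G}^2$ for all $a\in\mathcal{A}$. $\Phi_m:\mathbb{R}^d\to\mathbb{R}^m$ is a feature map. In round $t$, $q_t$ is a distribution on $\mathcal{A}$ (measurable w.r.t. the past), $\gamma\in(0,1)$, $\nu$ a distribution on $\mathcal{A}$, $p_t=\gamma\nu+(1-\gamma)q_t$, the player draws $a_t\sim p_t$, $\Sigma_m^{(t)}=\mathbb{E}_{x\sim p_t}[\Phi_m(x)\Phi_m(x)^\top]$ is assumed invertible, and $\hat w_t=\mathcal{K}(a_t,y_t)(\Sigma_m^{(t)})^{-1}\Phi_m(a_t)$. $\eta>0$, and $\mathcal{F}_{t-1}$ is the sigma field generated by the history up to the end of round $t-1$ (and the adversary's choice $y_t$). *)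

From HB Require Import structures.
From mathcomp Require Import all_boot all_order all_algebra.
From mathcomp Require Import reals.
From mathcomp Require Import sequences.
Set Implicit Arguments. Unset Strict Implicit. Unset Printing Implicit Defensive.
Import Order.TTheory GRing.Theory Num.Theory.
Local Open Scope ring_scope.

Section BanditDefs.
Variables (R : realType) (d m : nat).

Definition psd_kernel (K : 'rV[R]_d -> 'rV[R]_d -> R) : Prop :=
  (forall x y, K x y = K y x) /\
  (forall (k : nat) (x : 'I_k -> 'rV[R]_d) (c : 'I_k -> R),
      0 <= \sum_(i < k) \sum_(j < k) c i * c j * K (x i) (x j)).

(* probability distribution on the finite set A (given as a duplicate-free seq) *)
Definition is_distr (A : seq 'rV[R]_d) (p : 'rV[R]_d -> R) : Prop :=
  (forall a, a \in A -> 0 <= p a) /\ \sum_(a <- A) p a = 1.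

Definition dotc (u v : 'cV[R]_m) : R := \sum_(i < m) u i 0 * v i 0.

Definition Sigma (A : seq 'rV[R]_d) (Phi : 'rV[R]_d -> 'cV[R]_m)
  (p : 'rV[R]_d -> R) : 'M[R]_m :=
  \sum_(a <- A) p a *: (Phi a *m (Phi a)^T).

(* histories: h = [:: a_1; ...; a_{t-1}] is the history at the start of round t.
   q t h : distribution q_t given history h, y t h : adversary choice y_t. *)
Definition pmix (gamma : R) (nu : 'rV[R]_d -> R)
  (q : nat -> seq 'rV[R]_d -> 'rV[R]_d -> R) (t : nat) (h : seq 'rV[R]_d)
  : 'rV[R]_d -> R :=
  fun a => gamma * nu a + (1 - gamma) * q t h a.

Definition what (A : seq 'rV[R]_d) (Phi : 'rV[R]_d -> 'cV[R]_m)
  (K : 'rV[R]_d -> 'rV[R]_d -> R) (gamma : R) (nu : 'rV[R]_d -> R)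
  (q : nat -> seq 'rV[R]_d -> 'rV[R]_d -> R) (y : nat -> seq 'rV[R]_d -> 'rV[R]_d)
  (t : nat) (h : seq 'rV[R]_d) (at_ : 'rV[R]_d) : 'cV[R]_m :=
  K at_ (y t h) *: (invmx (Sigma A Phi (pmix gamma nu q t h)) *m Phi at_).

(* E[ E_{a ~ q_t}[ <hat w_t, Phi_m a>^2 ] | F_{t-1} ] as a function of the history h
   (the player's draw a_t ~ p_t is integrated out; y_t is determined by h) *)
Definition condterm (A : seq 'rV[R]_d) (Phi : 'rV[R]_d -> 'cV[R]_m)
  (K : 'rV[R]_d -> 'rV[R]_d -> R) (gamma : R) (nu : 'rV[R]_d -> R)
  (q : nat -> seq 'rV[R]_d -> 'rV[R]_d -> R) (y : nat -> seq 'rV[R]_d -> 'rV[R]_d)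
  (t : nat) (h : seq 'rV[R]_d) : R :=
  \sum_(at_ <- A) pmix gamma nu q t h at_ *
    \sum_(a <- A) q t h a * (dotc (what A Phi K gamma nu q y t h at_) (Phi a)) ^+ 2.

(* expectation over the next k actions of the process started from history h,
   where the action of round (size h).+1 is drawn from p_{(size h).+1} *)
Fixpoint hexp (A : seq 'rV[R]_d) (gamma : R) (nu : 'rV[R]_d -> R)
  (q : nat -> seq 'rV[R]_d -> 'rV[R]_d -> R) (k : nat) (h : seq 'rV[R]_d)
  (F : seq 'rV[R]_d -> R) : R :=
  match k with
  | 0 => F h
  | k'.+1 => \sum_(a <- A) pmix gamma nu q (size h).+1 h a
               * hexp A gamma nu q k' (rcons h a) F
  end.

Definition Gamma2 (A : seq 'rV[R]_d) (Phi : 'rV[R]_d -> 'cV[R]_m)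
  (K : 'rV[R]_d -> 'rV[R]_d -> R) (gamma eta : R) (nu : 'rV[R]_d -> R)
  (q : nat -> seq 'rV[R]_d -> 'rV[R]_d -> R) (y : nat -> seq 'rV[R]_d -> 'rV[R]_d)
  (n : nat) : R :=
  (expR 1 - 2) * eta *
    hexp A gamma nu q n [::]
      (fun h => \sum_(t < n) condterm A Phi K gamma nu q y t.+1 (take t h)).

End BanditDefs.

From HB Require Import structures.
From mathcomp Require Import all_boot all_order all_algebra.
From mathcomp Require Import reals sequences exp ring.
Import Order.TTheory GRing.Theory Num.Theory.
Local Open Scope ring_scope.

(* Each summand of Gamma_2 is bounded by pulling out |K(a_t, y_t)|^2 <= G^4
   and q_t <= p_t / (1 - gamma); what remains is
   E_{a_t ~ p_t} E_{a ~ p_t} <Sigma^-1 Phi a_t, Phi a>^2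
     = E_{a_t ~ p_t} Phi a_t^T Sigma^-1 Phi a_t = tr (Sigma^-1 Sigma) = m,
   so every round contributes at most G^4 m / (1 - gamma). *)

Section Bandit.
Variables (R : realType) (d m : nat).
Implicit Types (A : seq 'rV[R]_d) (Phi : 'rV[R]_d -> 'cV[R]_m)
  (p nu : 'rV[R]_d -> R).

Lemma dotcE (u v : 'cV[R]_m) : dotc u v = (u^T *m v) 0 0.
Proof. by rewrite /dotc mxE; apply: eq_bigr => i _; rewrite mxE. Qed.

Lemma dotcZl (k : R) (u v : 'cV[R]_m) : dotc (k *: u) v = k * dotc u v.
Proof. by rewrite /dotc mulr_sumr; apply: eq_bigr => i _; rewrite mxE mulrA. Qed.

Lemma trmx_Sigma A Phi p : (Sigma A Phi p)^T = Sigma A Phi p.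
Proof.
rewrite /Sigma raddf_sum; apply: eq_bigr => a _ /=.
by rewrite linearZ /= trmx_mul trmxK.
Qed.

Lemma sum_dotc_sqr_Sigma A Phi p (v : 'cV[R]_m) :
  \sum_(a <- A) p a * dotc v (Phi a) ^+ 2 = (v^T *m Sigma A Phi p *m v) 0 0.
Proof.
rewrite /Sigma mulmx_sumr mulmx_suml summxE; apply: eq_bigr => a _.
rewrite -scalemxAr -scalemxAl mxE; congr (_ * _).
rewrite expr2 {2}/dotc (eq_bigr _ (fun i _ => mulrC _ _)) -/(dotc (Phi a) v).
by rewrite !dotcE -[in RHS]mulmxA -(mulmxA (Phi a)) mulmxA [RHS]mxE big_ord1.
Qed.

Lemma sum_quad_invmx_Sigma A Phi p : Sigma A Phi p \in unitmx ->
  \sum_(b <- A) p b * ((Phi b)^T *m invmx (Sigma A Phi p) *m Phi b) 0 0 = m%:R.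
Proof.
move=> uS; set S := invmx _.
have quad_tr b : ((Phi b)^T *m S *m Phi b) 0 0 = \tr (S *m (Phi b *m (Phi b)^T)).
  by rewrite mulmxA mxtrace_mulC mulmxA /mxtrace big_ord1.
under eq_bigr => b _ do rewrite quad_tr -mxtraceZ scalemxAr.
by rewrite -raddf_sum -mulmx_sumr -/(Sigma A Phi p) /= mulVmx // mxtrace1.
Qed.

Lemma sum_dotc_sqr_invmx_Sigma A Phi p : Sigma A Phi p \in unitmx ->
  \sum_(b <- A) p b *
     \sum_(a <- A) p a * dotc (invmx (Sigma A Phi p) *m Phi b) (Phi a) ^+ 2
  = m%:R.
Proof.
move=> uS; rewrite -[RHS](sum_quad_invmx_Sigma _ _ _ uS); apply: eq_bigr => b _.
rewrite sum_dotc_sqr_Sigma trmx_mul trmx_inv trmx_Sigma.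
by rewrite !mulmxA -(mulmxA _ _ (Sigma _ _ _)) mulVmx // mulmx1.
Qed.

Lemma pmix_distr A (gamma : R) nu q t h : 0 <= gamma <= 1 ->
  is_distr A nu -> is_distr A (q t h) -> is_distr A (pmix gamma nu q t h).
Proof.
move=> /andP[g0 g1] [nu0 nu1] [q0 q1]; split=> [a aA|].
  by rewrite /pmix addr_ge0 // mulr_ge0 ?nu0 ?q0 // subr_ge0.
by rewrite /pmix big_split /= -!mulr_sumr nu1 q1 !mulr1 addrC subrK.
Qed.

Lemma le_pmix (gamma : R) nu q t h a : 0 <= gamma < 1 -> 0 <= nu a ->
  q t h a <= pmix gamma nu q t h a / (1 - gamma).
Proof.
move=> /andP[g0 g1] nu0; rewrite ler_pdivlMr ?subr_gt0 // /pmix mulrC lerDr.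
exact: mulr_ge0.
Qed.

Lemma condterm_le A Phi K (G gamma : R) nu q y t h :
  0 < gamma < 1 -> is_distr A nu -> is_distr A (q t h) ->
  (forall a, a \in A -> `|K a (y t h)| <= G ^+ 2) ->
  Sigma A Phi (pmix gamma nu q t h) \in unitmx ->
  condterm A Phi K gamma nu q y t h <= G ^+ 4 / (1 - gamma) * m%:R.
Proof.
move=> /andP[g0 g1] nuD qD KG uS.
set p := pmix gamma nu q t h; set c := G ^+ 4 / (1 - gamma).
have [p0 _] : is_distr A p by apply: pmix_distr; rewrite ?(ltW g0) ?(ltW g1).
have [q0 _] := qD; have [nu0 _] := nuD.
have c0 : 0 <= c by rewrite divr_ge0 ?exprn_even_ge0 // subr_ge0 ltW.
rewrite -(sum_dotc_sqr_invmx_Sigma _ _ _ uS) mulr_sumr /condterm -/p.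
rewrite big_seq [leRHS]big_seq; apply: ler_sum => b bA.
rewrite mulrCA ler_wpM2l ?p0 // mulr_sumr.
rewrite big_seq [leRHS]big_seq; apply: ler_sum => a aA.
rewrite /what -/p dotcZl exprMn mulrA [leRHS]mulrA ler_wpM2r ?sqr_ge0 //.
have K2G : K b (y t h) ^+ 2 <= G ^+ 4.
  by rewrite -real_normK ?num_real // (_ : 4 = 2 * 2)%N // exprM lerXn2r
    ?nnegrE ?KG // (le_trans _ (KG b bA)).
rewrite (_ : c * p a = p a / (1 - gamma) * G ^+ 4); last by rewrite /c; ring.
by rewrite ler_pM ?q0 ?sqr_ge0 // le_pmix ?nu0 ?(ltW g0).
Qed.

Lemma hexp_le_const A (gamma : R) nu q n (c : R) (F : seq 'rV[R]_d -> R) :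
  (forall h, (size h < n)%N -> all (mem A) h ->
     is_distr A (pmix gamma nu q (size h).+1 h)) ->
  forall k h, (size h + k <= n)%N -> all (mem A) h ->
  (forall h', size h' = (size h + k)%N -> all (mem A) h' -> F h' <= c) ->
  hexp A gamma nu q k h F <= c.
Proof.
move=> pD; elim=> [|k IHk] h hk hA Fc /=; first by rewrite Fc ?addn0.
have hn : (size h < n)%N by rewrite (leq_trans _ hk) // addnS ltnS leq_addr.
have [p0 p1] := pD h hn hA.
rewrite -[c]mul1r -p1 mulr_suml big_seq [leRHS]big_seq.
apply: ler_sum => a aA; rewrite ler_wpM2l ?p0 //.
apply: IHk.
- by rewrite size_rcons addSnnS.
- by rewrite all_rcons hA andbT.
- by move=> h' sh' h'A; apply: Fc; rewrite // sh' size_rcons addSnnS.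
Qed.

End Bandit.

Theorem lemma5 (R : realType) (d m n : nat)
  (A : seq 'rV[R]_d) (K : 'rV[R]_d -> 'rV[R]_d -> R) (G : R)
  (Phi : 'rV[R]_d -> 'cV[R]_m) (gamma eta : R) (nu : 'rV[R]_d -> R)
  (q : nat -> seq 'rV[R]_d -> 'rV[R]_d -> R)
  (y : nat -> seq 'rV[R]_d -> 'rV[R]_d) :
  uniq A ->
  psd_kernel K ->
  0 < gamma < 1 ->
  0 < eta ->
  is_distr A nu ->
  (forall t h, (0 < t <= n)%N -> size h = t.-1 -> all (fun x => x \in A) h ->
     [/\ is_distr A (q t h),
         (forall a, a \in A -> `|K a (y t h)| <= G ^+ 2) &
         Sigma A Phi (pmix gamma nu q t h) \in unitmx]) ->
  Gamma2 A Phi K gamma eta nu q y n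
    <= (expR 1 - 2) * G ^+ 4 * eta * m%:R * n%:R / (1 - gamma).
Proof.
move=> _ _ g01 eta0 nuD round.
set c := G ^+ 4 / (1 - gamma) * m%:R.
have e2 : 0 <= expR 1 - 2 :> R by rewrite subr_ge0 (le_trans _ (expR_ge1Dx 1)).
have sum_le : hexp A gamma nu q n [::]
    (fun h => \sum_(t < n) condterm A Phi K gamma nu q y t.+1 (take t h))
  <= c *+ n.
  apply: (@hexp_le_const _ _ A gamma nu q n) => // [h hn hA|h hn hA].
    have [qD _ _] := round (size h).+1 h hn (erefl _) hA.
    by case/andP: g01 => g0 g1; apply: pmix_distr; rewrite ?(ltW g0) ?(ltW g1).
  rewrite -[in c *+ n](card_ord n) -sumr_const; apply: ler_sum => t _.
  have st : size (take t h) = t by rewrite size_take hn ltn_ord.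
  have tA : all (mem A) (take t h) by apply/allP => x /mem_take /(allP hA).
  have [qD KG uS] := round t.+1 _ (ltn_ord t) st tA.
  exact: condterm_le.
have coef0 : 0 <= (expR 1 - 2) * eta by rewrite mulr_ge0 // ltW.
apply: le_trans (ler_wpM2l coef0 sum_le) _.
by rewrite /c -mulr_natr le_eqVlt; apply/orP; left; apply/eqP; ring.
Qed.
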